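(* Let $\mathcal H=L^2(S^1,\mathbb C^{N+1})$ and let $\mathcal H_+\subset\mathcal H$ be the subspace of boundary values of holomorphic maps $\{|z|<1\}\to\mathbb C^{N+1}$. Let $\mathbb P\subset\mathcal H$ be a closed subspace such that $z^{-1}\mathbb P\subset\mathbb P$ and $\mathbb P\oplus\mathcal H_+=\mathcal H$ (direct sum, not necessarily orthogonal). Then $\bigcap_{n\ge0}z^{-n}\mathbb P=\{0\}$.
   Context: Here $z$ denotes the coordinate function on $S^1=\{|z|=1\}$, acting on $\mathcal H$ by multiplication. *)

From Stdlib Require Import Reals ZArith.
Open Scope R_scope.

Definition C : Type := (R * R)%type.
Definition C0 : C := (0, 0).
Definition Cadd (a b : C) : C := (fst a + fst b, snd a + snd b).
Definition Cmul (a b : C) : C :=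
  (fst a * fst b - snd a * snd b, fst a * snd b + snd a * fst b).
Definition Csub (a b : C) : C := (fst a - fst b, snd a - snd b).
Definition Cnorm2 (a : C) : R := fst a ^ 2 + snd a ^ 2.

(* L^2(S^1, C^{N+1}) is modelled, via Fourier series (Plancherel), as the
   space of square-summable sequences of Fourier coefficients
   f : Z -> (nat -> C), where f k is the k-th Fourier coefficient, a vector
   of C^{N+1} whose components j > N are zero. *)
Definition coef_seq : Type := Z -> nat -> C.

Definition vnorm2 (N : nat) (v : nat -> C) : R :=
  sum_f_R0 (fun j => Cnorm2 (v j)) N.

(* the series over Z of the squared coefficient norms, folded over nat *)
Definition l2_terms (N : nat) (f : coef_seq) (n : nat) : R :=
  vnorm2 N (f (Z.of_nat n)) + vnorm2 N (f (- (Z.of_nat n + 1))%Z).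

Definition inH (N : nat) (f : coef_seq) : Prop :=
  (forall k j, (N < j)%nat -> f k j = C0) /\
  exists l, infinite_sum (l2_terms N f) l.

(* H_+ : boundary values of holomorphic maps on the unit disc
   (Hardy space): elements of H with vanishing negative Fourier modes. *)
Definition inHplus (N : nat) (f : coef_seq) : Prop :=
  inH N f /\ forall k j, (k < 0)%Z -> f k j = C0.

Definition fzero : coef_seq := fun _ _ => C0.
Definition fadd (f g : coef_seq) : coef_seq := fun k j => Cadd (f k j) (g k j).
Definition fsub (f g : coef_seq) : coef_seq := fun k j => Csub (f k j) (g k j).
Definition fscale (c : C) (f : coef_seq) : coef_seq := fun k j => Cmul c (f k j).

Definition zinv_pow (n : nat) (f : coef_seq) : coef_seq :=
  fun k j => f (k + Z.of_nat n)%Z j.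

Definition l2_converges (N : nat) (u : nat -> coef_seq) (f : coef_seq) : Prop :=
  forall eps, 0 < eps -> exists M, forall m, (M <= m)%nat ->
    exists l, infinite_sum (l2_terms N (fsub (u m) f)) l /\ l < eps.

Definition is_subspace (N : nat) (P : coef_seq -> Prop) : Prop :=
  (forall f, P f -> inH N f) /\
  P fzero /\
  (forall f g, P f -> P g -> P (fadd f g)) /\
  (forall c f, P f -> P (fscale c f)).

Definition is_closed (N : nat) (P : coef_seq -> Prop) : Prop :=
  forall (u : nat -> coef_seq) (f : coef_seq),
    (forall m, P (u m)) -> inH N f -> l2_converges N u f -> P f.

Definition direct_sum_Hplus (N : nat) (P : coef_seq -> Prop) : Prop :=
  (forall f, inH N f -> exists p h, P p /\ inHplus N h /\
      forall k j, f k j = Cadd (p k j) (h k j)) /\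
  (forall f, P f -> inHplus N f -> forall k j, f k j = C0).

(* The projection of H onto P along H_+ is bounded: Baire category in the
   complete space H, followed by successive approximation as in the open mapping
   theorem, gives a constant K with |p| <= K |y| whenever p is in P and y - p is
   in H_+.  If f = z^-n g with g in P, then g minus its negative modes lies in
   H_+, so g is the P-component of its negative part, whose norm is the l^2 tail
   of f below the mode -n.  Hence every Fourier coefficient of f, being one of g,
   is at most K times a tail of a convergent series, i.e. zero. *)

From Stdlib Require Import Reals ZArith Lra Lia Psatz FunctionalExtensionality.
From Stdlib Require Import Classical ClassicalEpsilon.
Open Scope R_scope.

(** * l^2 estimates *)

Definition supported (N : nat) (f : coef_seq) : Prop :=
  forall k j, (N < j)%nat -> f k j = C0.

Definition l2_partial (N : nat) (f : coef_seq) (n : nat) : R :=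
  sum_f_R0 (l2_terms N f) n.

(* Bounds all partial sums, so it makes sense before [f] is known to lie in [H]. *)
Definition norm_le (N : nat) (f : coef_seq) (r : R) : Prop :=
  forall n, l2_partial N f n <= r ^ 2.

Definition Creal (t : R) : C := (t, 0).

Ltac coef_ring :=
  unfold fadd, fsub, fscale, zinv_pow, fzero, Cadd, Csub, Cmul, Creal, C0;
  apply injective_projections; simpl; ring.

Lemma coef_ext (f g : coef_seq) : (forall k j, f k j = g k j) -> f = g.
Proof.
  intros H; apply functional_extensionality; intro k.
  apply functional_extensionality; intro j; apply H.
Qed.

Lemma Cnorm2_ge0 a : 0 <= Cnorm2 a.
Proof. destruct a as [x y]; unfold Cnorm2; simpl; nra. Qed.

Lemma Cnorm2_C0 : Cnorm2 C0 = 0.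
Proof. unfold Cnorm2, C0; simpl; ring. Qed.

Lemma Cnorm2_eq0 a : Cnorm2 a <= 0 -> a = C0.
Proof.
  destruct a as [x y]; unfold Cnorm2, C0; simpl; intros H.
  f_equal; nra.
Qed.

Lemma Cnorm2_add_le a b l : 0 < l ->
  Cnorm2 (Cadd a b) <= (1 + l) * Cnorm2 a + (1 + / l) * Cnorm2 b.
Proof.
  intros Hl; destruct a as [x1 y1], b as [x2 y2]; unfold Cnorm2, Cadd; simpl.
  assert (Hsq : forall x y, (x + y) ^ 2 <= (1 + l) * x ^ 2 + (1 + / l) * y ^ 2).
  { intros x y.
    assert (0 <= (l * x - y) ^ 2 / l)
      by (unfold Rdiv; apply Rmult_le_pos; [apply pow2_ge_0 | apply Rlt_le, Rinv_0_lt_compat; lra]).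
    replace ((1 + l) * x ^ 2 + (1 + / l) * y ^ 2)
      with ((x + y) ^ 2 + (l * x - y) ^ 2 / l) by (field; lra).
    lra. }
  pose proof (Hsq x1 x2); pose proof (Hsq y1 y2); lra.
Qed.

Lemma Cnorm2_scale t a : Cnorm2 (Cmul (Creal t) a) = t ^ 2 * Cnorm2 a.
Proof. destruct a; unfold Cnorm2, Cmul, Creal; simpl; ring. Qed.

Lemma vnorm2_ge0 N v : 0 <= vnorm2 N v.
Proof. apply cond_pos_sum; intros; apply Cnorm2_ge0. Qed.

Lemma l2_terms_ge0 N f i : 0 <= l2_terms N f i.
Proof.
  unfold l2_terms; pose proof (vnorm2_ge0 N (f (Z.of_nat i)));
  pose proof (vnorm2_ge0 N (f (- (Z.of_nat i + 1))%Z)); lra.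
Qed.

Lemma l2_partial_growing N f : Un_growing (l2_partial N f).
Proof. intros n; unfold l2_partial; simpl; pose proof (l2_terms_ge0 N f (S n)); lra. Qed.

Lemma l2_partial_ge0 N f n : 0 <= l2_partial N f n.
Proof. apply cond_pos_sum, l2_terms_ge0. Qed.

Lemma sum_f_R0_ge_term (a : nat -> R) i n :
  (forall i, 0 <= a i) -> (i <= n)%nat -> a i <= sum_f_R0 a n.
Proof.
  intros Ha Hin; induction Hin.
  - destruct i; simpl; [lra|]. pose proof (cond_pos_sum a i Ha); lra.
  - simpl; pose proof (Ha (S m)); lra.
Qed.

Lemma Cnorm2_le_l2_partial N f k j : (j <= N)%nat ->
  exists n, Cnorm2 (f k j) <= l2_partial N f n.
Proof.
  intros Hj.
  assert (Hv : Cnorm2 (f k j) <= vnorm2 N (f k))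
    by (apply (sum_f_R0_ge_term (fun j => Cnorm2 (f k j))); [intros; apply Cnorm2_ge0 | exact Hj]).
  assert (Hterm : forall n, l2_terms N f n <= l2_partial N f n)
    by (intros; apply sum_f_R0_ge_term; [apply l2_terms_ge0 | lia]).
  destruct (Z.ltb_spec k 0).
  - exists (Z.to_nat (- k - 1)); specialize (Hterm (Z.to_nat (- k - 1))).
    unfold l2_terms in Hterm.
    replace (- (Z.of_nat (Z.to_nat (- k - 1)) + 1))%Z with k in Hterm by lia.
    pose proof (vnorm2_ge0 N (f (Z.of_nat (Z.to_nat (- k - 1))))); lra.
  - exists (Z.to_nat k); specialize (Hterm (Z.to_nat k)).
    unfold l2_terms in Hterm; rewrite Z2Nat.id in Hterm by lia.
    pose proof (vnorm2_ge0 N (f (- (k + 1))%Z)); lra.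
Qed.

Lemma sum_f_R0_comb (u v : nat -> R) a b n :
  sum_f_R0 (fun i => a * u i + b * v i) n = a * sum_f_R0 u n + b * sum_f_R0 v n.
Proof. induction n; simpl; [ring | rewrite IHn; ring]. Qed.

Lemma l2_partial_le_comb N (h f g : coef_seq) a b :
  (forall k j, Cnorm2 (h k j) <= a * Cnorm2 (f k j) + b * Cnorm2 (g k j)) ->
  forall n, l2_partial N h n <= a * l2_partial N f n + b * l2_partial N g n.
Proof.
  intros H n; unfold l2_partial; rewrite <- sum_f_R0_comb.
  apply sum_Rle; intros i _; unfold l2_terms, vnorm2.
  assert (Hk : forall k, sum_f_R0 (fun j => Cnorm2 (h k j)) N <=
     a * sum_f_R0 (fun j => Cnorm2 (f k j)) N + b * sum_f_R0 (fun j => Cnorm2 (g k j)) N)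
    by (intros; rewrite <- sum_f_R0_comb; apply sum_Rle; intros; apply H).
  pose proof (Hk (Z.of_nat i)); pose proof (Hk (- (Z.of_nat i + 1))%Z); lra.
Qed.

Lemma norm_le_ext N f g r : (forall k j, f k j = g k j) -> norm_le N f r -> norm_le N g r.
Proof. intros H; rewrite (coef_ext f g H); auto. Qed.

Lemma norm_le_weaken N f r r' : 0 <= r <= r' -> norm_le N f r -> norm_le N f r'.
Proof. intros Hr H n; specialize (H n); nra. Qed.

Lemma norm_le_dominated N h f r :
  (forall k j, Cnorm2 (h k j) <= Cnorm2 (f k j)) -> norm_le N f r -> norm_le N h r.
Proof.
  intros Hd H n; eapply Rle_trans; [apply (l2_partial_le_comb N h f f 1 0) |].
  - intros k j; specialize (Hd k j); lra.
  - specialize (H n); lra.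
Qed.

Lemma norm_le_scale N f r t : norm_le N f r -> norm_le N (fscale (Creal t) f) (Rabs t * r).
Proof.
  intros H n; eapply Rle_trans; [apply (l2_partial_le_comb N _ f f (t ^ 2) 0) |].
  - intros k j; unfold fscale; rewrite Cnorm2_scale; pose proof (Cnorm2_ge0 (f k j)); lra.
  - rewrite Rpow_mult_distr, pow2_abs.
    specialize (H n); pose proof (pow2_ge_0 t); nra.
Qed.

Lemma Rle_sq_of_forall_pos X u : 0 <= u -> (forall d, 0 < d -> X <= (u + d) ^ 2) -> X <= u ^ 2.
Proof.
  intros Hu H; destruct (Rle_dec X (u ^ 2)) as [|Hlt]; auto; exfalso.
  set (d := Rmin 1 ((X - u ^ 2) / (2 * u + 2))).
  assert (Hd1 : 0 < d) by (apply Rmin_glb_lt; [lra | apply Rdiv_lt_0_compat; lra]).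
  assert (Hd2 : d * (2 * u + 2) <= X - u ^ 2).
  { replace (X - u ^ 2) with ((X - u ^ 2) / (2 * u + 2) * (2 * u + 2)) by (field; lra).
    apply Rmult_le_compat_r; [lra | apply Rmin_r]. }
  assert (d <= 1) by apply Rmin_l.
  specialize (H d Hd1); nra.
Qed.

(* Minkowski's inequality, from [|a + b|^2 <= (1 + l)|a|^2 + (1 + 1/l)|b|^2]
   with the optimal weight [l = t / s], perturbed so that [s, t > 0]. *)
Lemma norm_le_add N f g s t : 0 <= s -> 0 <= t ->
  norm_le N f s -> norm_le N g t -> norm_le N (fadd f g) (s + t).
Proof.
  intros Hs Ht Hf Hg n; apply Rle_sq_of_forall_pos; [lra |]; intros d Hd.
  set (l := (t + d / 2) / (s + d / 2)).
  assert (Hl : 0 < l) by (apply Rdiv_lt_0_compat; lra).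
  eapply Rle_trans; [apply (l2_partial_le_comb N _ f g (1 + l) (1 + / l)) |].
  { intros; apply Cnorm2_add_le; auto. }
  replace ((s + t + d) ^ 2) with ((1 + l) * (s + d / 2) ^ 2 + (1 + / l) * (t + d / 2) ^ 2)
    by (unfold l; field; lra).
  assert (0 < / l) by (apply Rinv_0_lt_compat; lra).
  specialize (Hf n); specialize (Hg n).
  apply Rplus_le_compat; apply Rmult_le_compat_l; nra.
Qed.

Lemma norm_le_sub N f g s t : 0 <= s -> 0 <= t ->
  norm_le N f s -> norm_le N g t -> norm_le N (fsub f g) (s + t).
Proof.
  intros Hs Ht Hf Hg.
  apply (norm_le_ext N (fadd f (fscale (Creal (-1)) g))); [intros; coef_ring |].
  apply norm_le_add; auto.
  replace t with (Rabs (-1) * t) by (rewrite Rabs_left by lra; ring).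
  apply norm_le_scale; auto.
Qed.

Lemma norm_le_sub_sym N f g r : norm_le N (fsub f g) r -> norm_le N (fsub g f) r.
Proof.
  intros H; apply (norm_le_ext N (fscale (Creal (-1)) (fsub f g))); [intros; coef_ring |].
  replace r with (Rabs (-1) * r) by (rewrite Rabs_left by lra; ring).
  apply norm_le_scale; auto.
Qed.

Lemma sum_f_R0_zero (a : nat -> R) n : (forall i, a i = 0) -> sum_f_R0 a n = 0.
Proof. intros H; induction n; simpl; rewrite ?IHn, H; ring. Qed.

Lemma norm_le_sub_diag N f : norm_le N (fsub f f) 0.
Proof.
  assert (Hz : forall k j, Cnorm2 (fsub f f k j) = 0)
    by (intros; replace (fsub f f k j) with C0 by coef_ring; apply Cnorm2_C0).
  intros n; unfold l2_partial, l2_terms, vnorm2.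
  rewrite sum_f_R0_zero; [simpl; lra |].
  intros i; rewrite !sum_f_R0_zero; auto; lra.
Qed.

Lemma norm_le_coord N f r k j : (j <= N)%nat -> norm_le N f r -> Cnorm2 (f k j) <= r ^ 2.
Proof.
  intros Hj H; destruct (Cnorm2_le_l2_partial N f k j Hj) as [n Hn].
  specialize (H n); lra.
Qed.

Lemma cv_const (c : R) : Un_cv (fun _ => c) c.
Proof. intros e He; exists 0%nat; intros; unfold Rdist; rewrite Rminus_diag, Rabs_R0; lra. Qed.

Lemma norm_le_summable N f r : norm_le N f r ->
  exists l, infinite_sum (l2_terms N f) l /\ l <= r ^ 2.
Proof.
  intros H; destruct (growing_cv _ (l2_partial_growing N f)) as [l Hl].
  { exists (r ^ 2); intros x [n ->]; apply H. }
  exists l; split; [exact Hl |].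
  exact (Rle_cv_lim H Hl (cv_const _)).
Qed.

Lemma norm_le_inH N f r : supported N f -> norm_le N f r -> inH N f.
Proof.
  intros Hs H; split; [exact Hs |].
  destruct (norm_le_summable N f r H) as [l [Hl _]]; eauto.
Qed.

Lemma inH_norm_le N f : inH N f -> exists r, 0 <= r /\ norm_le N f r.
Proof.
  intros [_ [l Hl]]; exists (sqrt l).
  assert (Hle : forall n, l2_partial N f n <= l)
    by (intros; apply (growing_ineq _ _ (l2_partial_growing N f) Hl)).
  assert (0 <= l) by (pose proof (Hle 0%nat); pose proof (l2_partial_ge0 N f 0); lra).
  split; [apply sqrt_pos |]; intros n; rewrite pow2_sqrt; auto.
Qed.

Lemma supported_add N f g : supported N f -> supported N g -> supported N (fadd f g).
Proof. intros Hf Hg k j Hj; unfold fadd; rewrite Hf, Hg by exact Hj; coef_ring. Qed.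

Lemma supported_sub N f g : supported N f -> supported N g -> supported N (fsub f g).
Proof. intros Hf Hg k j Hj; unfold fsub; rewrite Hf, Hg by exact Hj; coef_ring. Qed.

Lemma supported_scale N c f : supported N f -> supported N (fscale c f).
Proof. intros Hf k j Hj; unfold fscale; rewrite Hf by exact Hj; coef_ring. Qed.

Lemma inH_add N f g : inH N f -> inH N g -> inH N (fadd f g).
Proof.
  intros Hf Hg; destruct (inH_norm_le N f Hf) as [s [Hs Hfs]].
  destruct (inH_norm_le N g Hg) as [t [Ht Hgt]].
  apply (norm_le_inH N _ (s + t)); [apply supported_add; [exact (proj1 Hf) | exact (proj1 Hg)] |].
  apply norm_le_add; auto.
Qed.

Lemma inH_sub N f g : inH N f -> inH N g -> inH N (fsub f g).
Proof.
  intros Hf Hg; destruct (inH_norm_le N f Hf) as [s [Hs Hfs]].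
  destruct (inH_norm_le N g Hg) as [t [Ht Hgt]].
  apply (norm_le_inH N _ (s + t)); [apply supported_sub; [exact (proj1 Hf) | exact (proj1 Hg)] |].
  apply norm_le_sub; auto.
Qed.

Lemma inH_scale N t f : inH N f -> inH N (fscale (Creal t) f).
Proof.
  intros Hf; destruct (inH_norm_le N f Hf) as [s [_ Hfs]].
  apply (norm_le_inH N _ (Rabs t * s)); [apply supported_scale; exact (proj1 Hf) |].
  apply norm_le_scale; auto.
Qed.

(** * Completeness *)

Definition C_cv (u : nat -> C) (c : C) : Prop :=
  Un_cv (fun M => fst (u M)) (fst c) /\ Un_cv (fun M => snd (u M)) (snd c).

Lemma sum_f_R0_cv (a : nat -> nat -> R) (b : nat -> R) n :
  (forall i, (i <= n)%nat -> Un_cv (fun M => a M i) (b i)) ->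
  Un_cv (fun M => sum_f_R0 (a M) n) (sum_f_R0 b n).
Proof.
  induction n as [| n IH]; intros H; simpl; [apply H; lia |].
  apply CV_plus; [apply IH; intros; apply H | apply H]; lia.
Qed.

Lemma l2_partial_cv N (u : nat -> coef_seq) v n :
  (forall k j, (j <= N)%nat -> C_cv (fun M => u M k j) (v k j)) ->
  Un_cv (fun M => l2_partial N (u M) n) (l2_partial N v n).
Proof.
  intros H; apply sum_f_R0_cv; intros i _; unfold l2_terms, vnorm2.
  assert (Hk : forall k, Un_cv (fun M => sum_f_R0 (fun j => Cnorm2 (u M k j)) N)
                                (sum_f_R0 (fun j => Cnorm2 (v k j)) N)).
  { intros k; apply sum_f_R0_cv; intros j Hj; destruct (H k j Hj) as [H1 H2].
    unfold Cnorm2; apply CV_plus; apply CV_mult; auto; apply CV_mult; auto; apply cv_const. }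
  apply CV_plus; apply Hk.
Qed.

Lemma norm_le_of_cv N (u : nat -> coef_seq) v r m :
  (forall k j, (j <= N)%nat -> C_cv (fun M => u M k j) (v k j)) ->
  (forall M, (m <= M)%nat -> norm_le N (u M) r) -> norm_le N v r.
Proof.
  intros Hcv Hu n.
  apply (Rle_cv_lim (Un := fun M => l2_partial N (u (M + m)%nat) n) (Vn := fun _ => r ^ 2)).
  - intros M; apply Hu; lia.
  - apply CV_shift' with (f := fun M => l2_partial N (u M) n), l2_partial_cv; auto.
  - apply cv_const.
Qed.

Lemma norm_le_telescope N (u : nat -> coef_seq) (rho : nat -> R) :
  Un_decreasing rho -> (forall m, 0 <= rho m) ->
  (forall m, norm_le N (fsub (u (S m)) (u m)) (rho m - rho (S m))) ->
  forall m M, (m <= M)%nat -> norm_le N (fsub (u M) (u m)) (rho m - rho M).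
Proof.
  intros Hdec Hpos Hstep m M HmM; induction HmM as [| M HmM IH].
  - rewrite Rminus_diag; apply norm_le_sub_diag.
  - apply (norm_le_ext N (fadd (fsub (u (S M)) (u M)) (fsub (u M) (u m))));
      [intros; coef_ring |].
    replace (rho m - rho (S M)) with ((rho M - rho (S M)) + (rho m - rho M)) by ring.
    pose proof (Hdec M); pose proof (decreasing_prop rho m M Hdec HmM).
    apply norm_le_add; auto; lra.
Qed.

Lemma Rabs_le_of_sq_le x r : 0 <= r -> x ^ 2 <= r ^ 2 -> Rabs x <= r.
Proof. intros Hr H; unfold Rabs; destruct (Rcase_abs x); nra. Qed.

Lemma Cauchy_crit_of_bound (w rho : nat -> R) :
  (forall e, 0 < e -> exists m, rho m < e) ->
  (forall m M, (m <= M)%nat -> Rabs (w M - w m) <= rho m) -> Cauchy_crit w.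
Proof.
  intros Hrho H e He; destruct (Hrho (e / 2)) as [m0 Hm0]; [lra |].
  exists m0; intros n m Hn Hm; unfold Rdist.
  pose proof (H m0 n Hn); pose proof (H m0 m Hm).
  replace (w n - w m) with ((w n - w m0) + - (w m - w m0)) by ring.
  pose proof (Rabs_triang (w n - w m0) (- (w m - w m0))); rewrite Rabs_Ropp in *; lra.
Qed.

Lemma l2_complete N (u : nat -> coef_seq) (rho : nat -> R) :
  (forall m, supported N (u m)) ->
  Un_decreasing rho -> (forall m, 0 <= rho m) -> (forall e, 0 < e -> exists m, rho m < e) ->
  (forall m, norm_le N (fsub (u (S m)) (u m)) (rho m - rho (S m))) ->
  exists v, supported N v /\ forall m, norm_le N (fsub v (u m)) (rho m).
Proof.
  intros Hsupp Hdec Hpos Hsmall Hstep.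
  assert (Hball : forall m M, (m <= M)%nat -> norm_le N (fsub (u M) (u m)) (rho m)).
  { intros m M HmM; eapply norm_le_weaken; [| apply norm_le_telescope; eauto].
    pose proof (decreasing_prop rho m M Hdec HmM); pose proof (Hpos M); lra. }
  assert (Hcv : forall k j, (j <= N)%nat -> exists c, C_cv (fun M => u M k j) c).
  { intros k j Hj.
    assert (Hcoord : forall m M, (m <= M)%nat ->
      Rabs (fst (u M k j) - fst (u m k j)) <= rho m /\
      Rabs (snd (u M k j) - snd (u m k j)) <= rho m).
    { intros m M HmM; pose proof (norm_le_coord N _ _ k j Hj (Hball m M HmM)) as Hc.
      unfold fsub, Csub, Cnorm2 in Hc; simpl in Hc.
      pose proof (pow2_ge_0 (fst (u M k j) - fst (u m k j))).
      pose proof (pow2_ge_0 (snd (u M k j) - snd (u m k j))).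
      split; apply Rabs_le_of_sq_le; auto; lra. }
    destruct (R_complete (fun M => fst (u M k j))) as [x Hx].
    { apply (Cauchy_crit_of_bound _ rho Hsmall); intros; apply Hcoord; auto. }
    destruct (R_complete (fun M => snd (u M k j))) as [y Hy].
    { apply (Cauchy_crit_of_bound _ rho Hsmall); intros; apply Hcoord; auto. }
    exists (x, y); split; auto. }
  set (v := fun k j =>
    if (j <=? N)%nat then epsilon (inhabits C0) (C_cv (fun M => u M k j)) else C0).
  assert (Hv : forall k j, (j <= N)%nat -> C_cv (fun M => u M k j) (v k j)).
  { intros k j Hj; unfold v; rewrite (proj2 (Nat.leb_le j N) Hj).
    apply epsilon_spec, Hcv, Hj. }
  exists v; split.
  - intros k j Hj; unfold v; rewrite (proj2 (Nat.leb_gt j N) Hj); reflexivity.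
  - intros m; apply (norm_le_of_cv N (fun M => fsub (u M) (u m)) _ _ m); [| exact (Hball m)].
    intros k j Hj; destruct (Hv k j Hj) as [H1 H2]; unfold fsub, Csub; simpl.
    split; apply CV_minus; auto; apply cv_const.
Qed.

Lemma geometric_small c e : 0 < e -> exists n, c * (/ 2) ^ n < e.
Proof.
  intros He; destruct (Rle_lt_dec c 0) as [Hc | Hc]; [exists 0%nat; simpl; lra |].
  destruct (pow_lt_1_zero (/ 2) ltac:(rewrite Rabs_right; lra) (e / c))
    as [n Hn]; [apply Rdiv_lt_0_compat; lra |].
  exists n; specialize (Hn n (le_n n)); rewrite Rabs_right in Hn
    by (apply Rle_ge, pow_le; lra).
  apply (Rmult_lt_compat_l c) in Hn; [| lra].
  replace (c * (e / c)) with e in Hn by (field; lra); exact Hn.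
Qed.

Lemma inH_fzero N : inH N fzero.
Proof.
  apply (norm_le_inH N _ 0); [intros k j _; reflexivity |].
  apply (norm_le_ext N (fsub fzero fzero)); [intros; coef_ring | apply norm_le_sub_diag].
Qed.

(** * Baire category *)

Section Baire.
Variable N : nat.
Variable F : nat -> coef_seq -> Prop.
Hypothesis F_closed : forall m y, inH N y ->
  (forall e, 0 < e -> exists y', F m y' /\ norm_le N (fsub y y') e) -> F m y.
Hypothesis F_cover : forall y, inH N y -> exists m, F m y.
(* The negation of the conclusion of [l2_baire]. *)
Hypothesis F_no_ball : forall m x r, 0 < r -> inH N x ->
  exists y, inH N y /\ norm_le N (fsub y x) r /\ ~ F m y.

(* Balls are pairs (center, radius); [b'] lies inside [b] and misses [F m]. *)
Definition nested_ball (m : nat) (b b' : coef_seq * R) : Prop :=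
  inH N (fst b') /\ 0 < snd b' <= snd b / 2 /\
  norm_le N (fsub (fst b') (fst b)) (snd b / 2) /\
  forall z, norm_le N (fsub z (fst b')) (snd b') -> ~ F m z.

Lemma nested_ball_exists m b : inH N (fst b) -> 0 < snd b -> exists b', nested_ball m b b'.
Proof.
  destruct b as [x r]; simpl; intros Hx Hr.
  destruct (F_no_ball m x (r / 2)) as [y [Hy [Hyx HyF]]]; [lra | exact Hx |].
  assert (Hsep : exists e, 0 < e /\ forall y', F m y' -> ~ norm_le N (fsub y y') e).
  { apply NNPP; intros Hn; apply HyF, F_closed; [exact Hy |]; intros e He.
    apply NNPP; intros Hn2; apply Hn; exists e; split; [exact He |].
    intros y' Hy' Hyy'; apply Hn2; eauto. }
  destruct Hsep as [e [He Hsep]].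
  exists (y, Rmin (r / 2) e); unfold nested_ball; simpl.
  pose proof (Rmin_l (r / 2) e); pose proof (Rmin_r (r / 2) e).
  assert (0 < Rmin (r / 2) e) by (apply Rmin_glb_lt; lra).
  split; [exact Hy |]; split; [lra |]; split; [exact Hyx |].
  intros z Hz HzF; apply (Hsep z HzF), norm_le_sub_sym.
  eapply norm_le_weaken; [| exact Hz]; lra.
Qed.

Fixpoint balls (m : nat) : coef_seq * R :=
  match m with
  | O => (fzero, 1)
  | S m => epsilon (inhabits (fzero, 1)) (nested_ball m (balls m))
  end.

Lemma balls_spec m :
  inH N (fst (balls m)) /\ 0 < snd (balls m) /\ nested_ball m (balls m) (balls (S m)).
Proof.
  induction m as [| m [_ [_ Hnest]]].
  - split; [apply inH_fzero |]; split; [simpl; lra |].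
    apply (epsilon_spec (inhabits (fzero, 1)) (nested_ball 0 (balls 0))).
    apply nested_ball_exists; [apply inH_fzero | simpl; lra].
  - destruct Hnest as [Hin [[Hpos _] _]].
    split; [exact Hin |]; split; [exact Hpos |].
    apply (epsilon_spec (inhabits (fzero, 1)) (nested_ball (S m) (balls (S m)))).
    apply nested_ball_exists; auto.
Qed.

Lemma baire_contradiction : False.
Proof.
  set (rho m := snd (balls m)).
  assert (Hdec : Un_decreasing rho).
  { intros m; destruct (balls_spec m) as [_ [Hp [_ [[_ Hh] _]]]]; unfold rho; lra. }
  assert (Hpos : forall m, 0 <= rho m) by (intros m; apply Rlt_le, (balls_spec m)).
  assert (Hgeom : forall m, rho m <= (/ 2) ^ m).
  { induction m; [unfold rho; simpl; lra |].
    destruct (balls_spec m) as [_ [_ [_ [[_ Hh] _]]]]; fold (rho m) (rho (S m)) in Hh.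
    change ((/ 2) ^ S m) with (/ 2 * (/ 2) ^ m); lra. }
  destruct (l2_complete N (fun m => fst (balls m)) rho) as [v [Hvs Hv]]; auto.
  - intros m; exact (proj1 (proj1 (balls_spec m))).
  - intros e He; destruct (geometric_small 1 e He) as [m Hm].
    exists m; specialize (Hgeom m); lra.
  - intros m; destruct (balls_spec m) as [_ [_ [_ [[_ Hh] [Hstep _]]]]].
    fold (rho m) (rho (S m)) in Hh, Hstep.
    eapply norm_le_weaken; [| exact Hstep]; pose proof (Hpos (S m)); lra.
  - assert (HvH : inH N v).
    { apply (norm_le_inH N v (rho 0%nat) Hvs).
      apply (norm_le_ext N (fsub v (fst (balls 0)))); [intros; coef_ring | apply Hv]. }
    destruct (F_cover v HvH) as [m Hm].
    destruct (balls_spec m) as [_ [_ [_ [_ [_ Hdisj]]]]].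
    exact (Hdisj v (Hv (S m)) Hm).
Qed.
End Baire.

Lemma l2_baire N (F : nat -> coef_seq -> Prop) :
  (forall m y, inH N y ->
     (forall e, 0 < e -> exists y', F m y' /\ norm_le N (fsub y y') e) -> F m y) ->
  (forall y, inH N y -> exists m, F m y) ->
  exists m x r, 0 < r /\ inH N x /\
    forall y, inH N y -> norm_le N (fsub y x) r -> F m y.
Proof.
  intros Hclosed Hcover; apply NNPP; intros Hn.
  apply (baire_contradiction N F Hclosed Hcover).
  intros m x r Hr Hx; apply NNPP; intros Hn2; apply Hn.
  exists m, x, r; split; [exact Hr |]; split; [exact Hx |].
  intros y Hy Hyx; apply NNPP; intros HF; apply Hn2; eauto.
Qed.

Lemma inHplus_sub N f g : inHplus N f -> inHplus N g -> inHplus N (fsub f g).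
Proof.
  intros [Hf Hf'] [Hg Hg']; split; [apply inH_sub; auto |].
  intros k j Hk; unfold fsub; rewrite Hf', Hg' by exact Hk; coef_ring.
Qed.

Lemma inHplus_scale N t f : inHplus N f -> inHplus N (fscale (Creal t) f).
Proof.
  intros [Hf Hf']; split; [apply inH_scale; auto |].
  intros k j Hk; unfold fscale; rewrite Hf' by exact Hk; coef_ring.
Qed.

Lemma C_eq0_of_Cnorm2_small a : (forall e, 0 < e -> Cnorm2 a <= e ^ 2) -> a = C0.
Proof.
  intros H; apply Cnorm2_eq0; destruct (Rle_dec (Cnorm2 a) 0) as [| Hpos]; auto.
  specialize (H (sqrt (Cnorm2 a) / 2) ltac:(apply Rdiv_lt_0_compat; [apply sqrt_lt_R0 |]; lra)).
  replace ((sqrt (Cnorm2 a) / 2) ^ 2) with ((sqrt (Cnorm2 a)) ^ 2 / 4) in H by field.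
  rewrite pow2_sqrt in H; lra.
Qed.

(** * Boundedness of the projection onto P along H_+ *)

Section Projection.
Variable N : nat.
Variable P : coef_seq -> Prop.
Hypothesis P_subspace : is_subspace N P.
Hypothesis P_closed : is_closed N P.
Hypothesis P_complement : direct_sum_Hplus N P.

Definition Pcomp (y p : coef_seq) : Prop := P p /\ inHplus N (fsub y p).

Lemma P_inH p : P p -> inH N p.
Proof. apply P_subspace. Qed.

Lemma P_add p q : P p -> P q -> P (fadd p q).
Proof. apply P_subspace. Qed.

Lemma P_scale t p : P p -> P (fscale (Creal t) p).
Proof. apply P_subspace. Qed.

Lemma P_sub p q : P p -> P q -> P (fsub p q).
Proof.
  intros Hp Hq; replace (fsub p q) with (fadd p (fscale (Creal (-1)) q))
    by (apply coef_ext; intros; coef_ring).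
  apply P_add, P_scale; auto.
Qed.

Lemma Pcomp_inH y p : Pcomp y p -> inH N y.
Proof.
  intros [Hp [Hh _]]; replace y with (fadd (fsub y p) p) by (apply coef_ext; intros; coef_ring).
  apply inH_add, P_inH; auto.
Qed.

Lemma Pcomp_exists y : inH N y -> exists p, Pcomp y p.
Proof.
  intros Hy; destruct (proj1 P_complement y Hy) as [p [h [Hp [Hh Hyph]]]].
  exists p; split; [exact Hp |].
  replace (fsub y p) with h by (apply coef_ext; intros; unfold fsub; rewrite Hyph; coef_ring).
  exact Hh.
Qed.

Lemma Pcomp_sub y1 p1 y2 p2 : Pcomp y1 p1 -> Pcomp y2 p2 -> Pcomp (fsub y1 y2) (fsub p1 p2).
Proof.
  intros [Hp1 Hh1] [Hp2 Hh2]; split; [apply P_sub; auto |].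
  replace (fsub (fsub y1 y2) (fsub p1 p2)) with (fsub (fsub y1 p1) (fsub y2 p2))
    by (apply coef_ext; intros; coef_ring).
  apply inHplus_sub; auto.
Qed.

Lemma Pcomp_scale t y p : Pcomp y p -> Pcomp (fscale (Creal t) y) (fscale (Creal t) p).
Proof.
  intros [Hp Hh]; split; [apply P_scale; auto |].
  replace (fsub (fscale (Creal t) y) (fscale (Creal t) p)) with (fscale (Creal t) (fsub y p))
    by (apply coef_ext; intros; coef_ring).
  apply inHplus_scale; auto.
Qed.

Lemma Pcomp_unique y p1 p2 : Pcomp y p1 -> Pcomp y p2 -> p1 = p2.
Proof.
  intros H1 H2; destruct (Pcomp_sub _ _ _ _ H1 H2) as [Hp Hh].
  assert (Hz : forall k j, fsub p1 p2 k j = C0).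
  { apply (proj2 P_complement _ Hp).
    replace (fsub p1 p2) with (fscale (Creal (-1)) (fsub (fsub y y) (fsub p1 p2)))
      by (apply coef_ext; intros; coef_ring).
    apply inHplus_scale; exact Hh. }
  apply coef_ext; intros k j; specialize (Hz k j).
  unfold fsub, Csub, C0 in Hz; destruct (p1 k j), (p2 k j); injection Hz; simpl.
  intros; f_equal; lra.
Qed.

Definition Pball_closure (m : nat) (y : coef_seq) : Prop :=
  forall e, 0 < e -> exists y' p, Pcomp y' p /\ norm_le N p (INR m) /\ norm_le N (fsub y y') e.

Lemma Pball_closure_closed m y : inH N y ->
  (forall e, 0 < e -> exists y', Pball_closure m y' /\ norm_le N (fsub y y') e) ->
  Pball_closure m y.
Proof.
  intros _ Hy e He; destruct (Hy (e / 2)) as [y'' [Hy'' Hyy'']]; [lra |].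
  destruct (Hy'' (e / 2)) as [y' [p [Hp [Hpm Hy''y']]]]; [lra |].
  exists y', p; split; [exact Hp |]; split; [exact Hpm |].
  apply (norm_le_ext N (fadd (fsub y y'') (fsub y'' y'))); [intros; coef_ring |].
  replace e with (e / 2 + e / 2) by field; apply norm_le_add; auto; lra.
Qed.

Lemma Pball_closure_cover y : inH N y -> exists m, Pball_closure m y.
Proof.
  intros Hy; destruct (Pcomp_exists y Hy) as [p Hp].
  destruct (inH_norm_le N p (P_inH p (proj1 Hp))) as [r [Hr Hpr]].
  destruct (INR_archimed 1 r) as [m Hm]; [lra |].
  exists m; intros e He; exists y, p; split; [exact Hp |]; split.
  - eapply norm_le_weaken; [| exact Hpr]; lra.
  - eapply norm_le_weaken; [| apply norm_le_sub_diag]; lra.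
Qed.

(* Baire category gives a ball inside some [Pball_closure m]; differences of
   points of that ball cover a ball around the origin. *)
Lemma Pcomp_approx_ball : exists K r, 0 <= K /\ 0 < r /\
  forall y e, inH N y -> norm_le N y r -> 0 < e ->
    exists y' p, Pcomp y' p /\ norm_le N p K /\ norm_le N (fsub y y') e.
Proof.
  destruct (l2_baire N Pball_closure Pball_closure_closed Pball_closure_cover)
    as [m [x [r [Hr [Hx Hball]]]]].
  exists (INR m + INR m), r; split; [pose proof (pos_INR m); lra |]; split; [exact Hr |].
  intros y e Hy Hyr He.
  assert (Hxy : Pball_closure m (fadd x y)).
  { apply Hball; [apply inH_add; auto |].
    apply (norm_le_ext N y); [intros; coef_ring | exact Hyr]. }
  assert (Hxx : Pball_closure m x).
  { apply Hball; [exact Hx |]; eapply norm_le_weaken; [| apply norm_le_sub_diag]; lra. }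
  destruct (Hxy (e / 2)) as [y1 [p1 [Hp1 [Hp1m Hy1]]]]; [lra |].
  destruct (Hxx (e / 2)) as [y2 [p2 [Hp2 [Hp2m Hy2]]]]; [lra |].
  exists (fsub y1 y2), (fsub p1 p2); split; [apply Pcomp_sub; auto |].
  split; [apply norm_le_sub; auto; apply pos_INR |].
  apply (norm_le_ext N (fsub (fsub (fadd x y) y1) (fsub x y2))); [intros; coef_ring |].
  replace e with (e / 2 + e / 2) by field; apply norm_le_sub; auto; lra.
Qed.

Lemma Pcomp_approx : exists K, 0 <= K /\
  forall y s, inH N y -> 0 < s -> norm_le N y s ->
    exists y' p, Pcomp y' p /\ norm_le N p (K * s) /\ norm_le N (fsub y y') (s / 2).
Proof.
  destruct Pcomp_approx_ball as [K [r [HK [Hr Happrox]]]].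
  exists (K / r); split; [apply Rmult_le_pos; [lra | apply Rlt_le, Rinv_0_lt_compat, Hr] |].
  intros y s Hy Hs Hys; set (t := r / s).
  assert (Ht : 0 < t) by (apply Rdiv_lt_0_compat; auto).
  destruct (Happrox (fscale (Creal t) y) (t * (s / 2))) as [y' [p [Hp [HpK Hy']]]].
  - apply inH_scale, Hy.
  - replace r with (Rabs t * s) by (rewrite Rabs_right by lra; unfold t; field; lra).
    apply norm_le_scale, Hys.
  - apply Rmult_lt_0_compat; lra.
  - exists (fscale (Creal (/ t)) y'), (fscale (Creal (/ t)) p).
    split; [apply Pcomp_scale, Hp |].
    assert (Hti : Rabs (/ t) = / t) by (apply Rabs_right, Rle_ge, Rlt_le, Rinv_0_lt_compat, Ht).
    split.
    + replace (K / r * s) with (Rabs (/ t) * K) by (rewrite Hti; unfold t; field; lra).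
      apply norm_le_scale, HpK.
    + apply (norm_le_ext N (fscale (Creal (/ t)) (fsub (fscale (Creal t) y) y'))).
      { intros k j; unfold fsub, fscale, Csub, Cmul, Creal.
        apply injective_projections; simpl; field; lra. }
      replace (s / 2) with (Rabs (/ t) * (t * (s / 2))) by (rewrite Hti; field; lra).
      apply norm_le_scale, Hy'.
Qed.

Section Iteration.
Variable K : R.
Hypothesis K_ge0 : 0 <= K.
Hypothesis approx : forall y s, inH N y -> 0 < s -> norm_le N y s ->
  exists y' p, Pcomp y' p /\ norm_le N p (K * s) /\ norm_le N (fsub y y') (s / 2).
Variables (y : coef_seq) (s : R).
Hypothesis y_inH : inH N y.
Hypothesis s_pos : 0 < s.
Hypothesis y_norm : norm_le N y s.

Definition radius (i : nat) : R := s * (/ 2) ^ i.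

Lemma radius_pos i : 0 < radius i.
Proof. apply Rmult_lt_0_compat; [exact s_pos | apply pow_lt; lra]. Qed.

Lemma radius_S i : radius (S i) = radius i / 2.
Proof. unfold radius; simpl; field. Qed.

Definition approx_step (i : nat) (e : coef_seq) (q : coef_seq * coef_seq) : Prop :=
  Pcomp (fst q) (snd q) /\ norm_le N (snd q) (K * radius i) /\
  norm_le N (fsub e (fst q)) (radius (S i)).

Fixpoint residual (i : nat) : coef_seq :=
  match i with
  | O => y
  | S i => fsub (residual i) (fst (epsilon (inhabits (fzero, fzero)) (approx_step i (residual i))))
  end.

Definition approximant (i : nat) : coef_seq * coef_seq :=
  epsilon (inhabits (fzero, fzero)) (approx_step i (residual i)).

Lemma residual_spec i :
  inH N (residual i) /\ norm_le N (residual i) (radius i) /\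
  approx_step i (residual i) (approximant i).
Proof.
  assert (Hstep : forall i, inH N (residual i) -> norm_le N (residual i) (radius i) ->
                  approx_step i (residual i) (approximant i)).
  { intros i' Hin Hnorm; unfold approximant; apply epsilon_spec.
    destruct (approx _ _ Hin (radius_pos i') Hnorm) as [y' [p Hyp]].
    exists (y', p); unfold approx_step; rewrite radius_S; exact Hyp. }
  induction i as [| i [Hin [_ [[Hp Hh] [_ Hres]]]]].
  - assert (Hnorm : norm_le N y (radius 0))
      by (unfold radius; rewrite pow_O, Rmult_1_r; exact y_norm).
    split; [exact y_inH |]; split; [exact Hnorm |]; apply Hstep; auto.
  - assert (Hin' : inH N (residual (S i)))
      by (apply inH_sub; [exact Hin | apply (Pcomp_inH _ _ (conj Hp Hh))]).
    split; [exact Hin' |]; split; [exact Hres |]; apply Hstep; auto.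
Qed.

Fixpoint Psum (n : nat) : coef_seq :=
  match n with
  | O => snd (approximant 0)
  | S n => fadd (Psum n) (snd (approximant (S n)))
  end.

Lemma Psum_P n : P (Psum n).
Proof.
  induction n; simpl; [| apply P_add; [exact IHn |]];
    apply (residual_spec _).
Qed.

(* On negative modes each approximation coincides with its [P]-component. *)
Lemma Psum_residual_neg n k j : (k < 0)%Z -> y k j = Cadd (Psum n k j) (residual (S n) k j).
Proof.
  intros Hk.
  assert (Hagree : forall i, fst (approximant i) k j = snd (approximant i) k j).
  { intros i; destruct (residual_spec i) as [_ [_ [[_ [_ Hneg]] _]]].
    specialize (Hneg k j Hk); unfold fsub, Csub, C0 in Hneg.
    destruct (fst (approximant i) k j), (snd (approximant i) k j); injection Hneg.
    simpl; intros; f_equal; lra. }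
  induction n as [| n IH].
  - change (y k j = Cadd (snd (approximant 0) k j) (Csub (y k j) (fst (approximant 0) k j))).
    rewrite Hagree; coef_ring.
  - rewrite IH; change (Cadd (Psum n k j) (residual (S n) k j) =
      Cadd (Cadd (Psum n k j) (snd (approximant (S n)) k j))
           (Csub (residual (S n) k j) (fst (approximant (S n)) k j))).
    rewrite Hagree; coef_ring.
Qed.

Lemma Pcomp_norm_le p : Pcomp y p -> norm_le N p (2 * (K * s)).
Proof.
  intros Hyp; set (rho m := K * radius m).
  assert (Hrho_pos : forall m, 0 <= rho m)
    by (intros; apply Rmult_le_pos; [exact K_ge0 | apply Rlt_le, radius_pos]).
  assert (Hrho_dec : Un_decreasing rho)
    by (intros m; unfold rho; rewrite radius_S; pose proof (Hrho_pos m); unfold rho in *; lra).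
  assert (Hrho_small : forall e, 0 < e -> exists m, rho m < e).
  { intros e He; destruct (geometric_small (K * s) e He) as [m Hm].
    exists m; unfold rho, radius; lra. }
  destruct (l2_complete N Psum rho) as [v [Hvs Hv]]; auto.
  { intros m; exact (proj1 (P_inH _ (Psum_P m))). }
  { intros m; apply (norm_le_ext N (snd (approximant (S m)))); [intros; simpl; coef_ring |].
    replace (rho m - rho (S m)) with (K * radius (S m)) by (unfold rho; rewrite radius_S; field).
    apply (residual_spec (S m)). }
  assert (Hv_norm : norm_le N v (2 * (K * s))).
  { apply (norm_le_ext N (fadd (Psum 0) (fsub v (Psum 0)))); [intros; coef_ring |].
    replace (2 * (K * s)) with (rho 0%nat + rho 0%nat) by (unfold rho, radius; simpl; ring).
    apply norm_le_add; auto; apply (residual_spec 0). }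
  assert (HvH : inH N v) by exact (norm_le_inH N v _ Hvs Hv_norm).
  assert (HvP : P v).
  { apply (P_closed Psum v Psum_P HvH); intros eps Heps.
    destruct (Hrho_small (sqrt eps)) as [M HM]; [apply sqrt_lt_R0, Heps |].
    exists M; intros m HmM.
    destruct (norm_le_summable N _ _ (norm_le_sub_sym N _ _ _ (Hv m))) as [l [Hl Hlm]].
    exists l; split; [exact Hl |].
    pose proof (decreasing_prop rho M m Hrho_dec HmM); pose proof (Hrho_pos m).
    assert (rho m ^ 2 < sqrt eps ^ 2) by (pose proof (sqrt_pos eps); nra).
    rewrite pow2_sqrt in *; lra. }
  assert (Hyv : inHplus N (fsub y v)).
  { split; [apply inH_sub; auto |]; intros k j Hk.
    destruct (le_lt_dec j N) as [Hj | Hj]; [| exact (supported_sub N y v (proj1 y_inH) Hvs k j Hj)].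
    apply C_eq0_of_Cnorm2_small; intros e He.
    destruct (geometric_small ((K + 1) * s) e He) as [n Hn].
    replace (fsub y v k j) with (fsub (residual (S n)) (fsub v (Psum n)) k j)
      by (unfold fsub; rewrite (Psum_residual_neg n k j Hk); coef_ring).
    eapply Rle_trans;
      [apply (norm_le_coord N); [exact Hj |];
       apply norm_le_sub; [| | apply residual_spec | apply Hv] |].
    - apply Rlt_le, radius_pos.
    - apply Hrho_pos.
    - apply pow_incr; split; [pose proof (radius_pos (S n)); pose proof (Hrho_pos n); lra |].
      unfold rho; rewrite radius_S; unfold radius in *.
      pose proof (pow_lt (/ 2) n ltac:(lra)); nra. }
  rewrite (Pcomp_unique y p v Hyp (conj HvP Hyv)); exact Hv_norm.
Qed.
End Iteration.

Lemma Pcomp_bounded : exists K, 0 <= K /\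
  forall y p s, Pcomp y p -> 0 < s -> norm_le N y s -> norm_le N p (K * s).
Proof.
  destruct Pcomp_approx as [K [HK Happrox]]; exists (2 * K); split; [lra |].
  intros y p s Hyp Hs Hys; rewrite Rmult_assoc.
  exact (Pcomp_norm_le K HK Happrox y s (Pcomp_inH y p Hyp) Hs Hys p Hyp).
Qed.
End Projection.

(** * Negative modes *)

Definition neg_modes (g : coef_seq) : coef_seq := fun k j => if (k <? 0)%Z then g k j else C0.

Lemma Pcomp_neg_modes N P g : is_subspace N P -> P g -> Pcomp N P (neg_modes g) g.
Proof.
  intros HP Hg; split; [exact Hg |].
  assert (Hgin : inH N g) by (apply HP, Hg).
  destruct (inH_norm_le N g Hgin) as [r [_ Hgr]].
  split; [apply (norm_le_inH N _ r) |].
  - intros k j Hj; unfold fsub, neg_modes; rewrite (proj1 Hgin k j Hj).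
    destruct (k <? 0)%Z; coef_ring.
  - apply (norm_le_dominated N _ g); [| exact Hgr]; intros k j; unfold fsub, neg_modes.
    destruct (k <? 0)%Z.
    + replace (Csub (g k j) (g k j)) with C0 by coef_ring; rewrite Cnorm2_C0; apply Cnorm2_ge0.
    + right; destruct (g k j); unfold Cnorm2, Csub, C0; simpl; ring.
  - intros k j Hk; unfold fsub, neg_modes; rewrite (proj2 (Z.ltb_lt k 0) Hk); coef_ring.
Qed.

Lemma sum_f_R0_shift (a : nat -> R) n m :
  sum_f_R0 (fun i => a (i + S n)%nat) m = sum_f_R0 a (m + S n) - sum_f_R0 a n.
Proof.
  induction m as [| m IH]; simpl; [ring |].
  rewrite IH; replace (S (m + S n)) with (S m + S n)%nat by lia; ring.
Qed.

Lemma l2_tail_small N f L : infinite_sum (l2_terms N f) L ->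
  forall e, 0 < e -> exists n, forall m, sum_f_R0 (fun i => l2_terms N f (i + n)%nat) m <= e.
Proof.
  intros HL e He; destruct (HL e He) as [n0 Hn0].
  exists (S n0); intros m; rewrite sum_f_R0_shift.
  pose proof (growing_ineq _ _ (l2_partial_growing N f) HL (m + S n0)).
  specialize (Hn0 n0 (le_n n0)); unfold Rdist in Hn0; apply Rabs_def2 in Hn0.
  unfold l2_partial in *; lra.
Qed.

Lemma norm_le_neg_modes_shift N f g n r :
  (forall k j, f k j = g (k + Z.of_nat n)%Z j) ->
  (forall m, sum_f_R0 (fun i => l2_terms N f (i + n)%nat) m <= r ^ 2) ->
  norm_le N (neg_modes g) r.
Proof.
  intros Hfg Htail m; eapply Rle_trans; [| apply (Htail m)].
  apply sum_Rle; intros i _; unfold l2_terms, vnorm2.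
  apply Rplus_le_compat.
  - rewrite sum_f_R0_zero; [apply cond_pos_sum; intros; apply Cnorm2_ge0 |].
    intros j; unfold neg_modes; rewrite (proj2 (Z.ltb_ge _ 0)) by lia; apply Cnorm2_C0.
  - right; apply sum_eq; intros j _; unfold neg_modes.
    rewrite (proj2 (Z.ltb_lt _ 0)) by lia; rewrite Hfg; do 3 f_equal; lia.
Qed.

Theorem lemmaA2 (N : nat) (P : coef_seq -> Prop) :
  is_subspace N P ->
  is_closed N P ->
  (forall f, P f -> P (zinv_pow 1 f)) ->
  direct_sum_Hplus N P ->
  forall f : coef_seq,
    (forall n : nat, exists g, P g /\ forall k j, f k j = zinv_pow n g k j) ->
    forall k j, f k j = C0.
Proof.
  intros HPsub HPcl _ HPcompl f Hf k j.
  destruct (Pcomp_bounded N P HPsub HPcl HPcompl) as [K [HK Hbound]].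
  assert (Hfin : inH N f).
  { destruct (Hf 0%nat) as [g [Hg Hfg]].
    replace f with g by (apply coef_ext; intros; rewrite Hfg; unfold zinv_pow; f_equal; lia).
    apply HPsub, Hg. }
  destruct (le_lt_dec j N) as [Hj | Hj]; [| exact (proj1 Hfin k j Hj)].
  destruct Hfin as [_ [L HL]].
  apply C_eq0_of_Cnorm2_small; intros e He.
  set (d := e / (K + 1)); assert (Hd : 0 < d) by (apply Rdiv_lt_0_compat; lra).
  destruct (l2_tail_small N f L HL (d ^ 2) (pow_lt d 2 Hd)) as [n Htail].
  destruct (Hf n) as [g [Hg Hfg]].
  assert (Hneg : norm_le N (neg_modes g) d) by (apply (norm_le_neg_modes_shift N f g n); auto).
  pose proof (Hbound _ _ _ (Pcomp_neg_modes N P g HPsub Hg) Hd Hneg) as Hgd.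
  rewrite Hfg; eapply Rle_trans; [apply (norm_le_coord N _ _ _ _ Hj Hgd) |].
  apply pow_incr; split; [apply Rmult_le_pos; lra |].
  unfold d; apply (Rmult_le_reg_r (K + 1)); [lra |].
  replace (K * (e / (K + 1)) * (K + 1)) with (K * e) by (field; lra); nra.
Qed.
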